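(* Let $\alpha,n\in\mathbb{N}$ and let $l$ be an integer with $l\geqslant\lfloor n/2^{\alpha}\rfloor\geqslant1$ and $$l\equiv\Big\lfloor\frac n{2^{\alpha}}\Big\rfloor\pmod{2^{\lfloor\log_2(n/2^{\alpha})\rfloor}}.$$ Then $$\operatorname{ord}_2\Bigg(\sum_{k\equiv0\ (\mathrm{mod}\ 2^{\alpha})}\binom nk(-1)^k\Big(\frac k{2^{\alpha}}\Big)^l\Bigg)=\operatorname{ord}_2\Big(\Big\lfloor\frac n{2^{\alpha}}\Big\rfloor!\Big).$$
   Context: $\operatorname{ord}_2$ denotes the $2$-adic order. The sum runs over all integers $k\equiv 0\pmod{2^\alpha}$, with $\binom nk=0$ unless $0\le k\le n$. *)

From mathcomp Require Import all_boot all_order all_algebra.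
Set Implicit Arguments. Unset Strict Implicit. Unset Printing Implicit Defensive.
Import Order.TTheory GRing.Theory Num.Theory.

(* 2-adic order of an integer (value for 0 is irrelevant: the statement
   separately asserts nonzeroness, matching ord_2(0) = +oo convention). *)
Definition ord2 (z : int) : nat := logn 2 `|z|%N.

From mathcomp Require Import all_boot all_order all_algebra.
From mathcomp Require Import zify ring.
Import Order.TTheory GRing.Theory Num.Theory.

(* Let f_0 = (1 - x)^n and let f_(a+1) be the even part of f_a, i.e.
   f_(a+1)(x^2) = (f_a(x) + f_a(-x)) / 2; then f_alpha is the polynomial whose
   coefficients r_j = (-1)^(2^alpha j) C(n, 2^alpha j) appear in the sum, of
   degree m = n / 2^alpha with odd leading coefficient.  Call f of degree d
   flat at 1 when 2^(v_2(d!) + 1) divides every derivative f^(i)(1), i < d.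
   (1 - x)^n is flat, and flatness passes to the even part: by binomial
   inversion the derivatives at 1 of the even part are combinations of the
   f^(i)(1) whose coefficients gain back the d/2 factors of two lost in
   v_2((d/2)!) = v_2(d!) - d/2.  Expanding j^l in falling factorials, the sum
   is sum_i S(l, i) f_alpha^(i)(1): the terms i < m are divisible by
   2^(v_2(m!) + 1), and the term i = m is m! S(l, m) r_m, where the Stirling
   number S(l, m) is odd by the congruence on l. *)

(** * 2-adic valuation of factorials *)

Lemma logn_factS p n : logn p n.+1`! = logn p n.+1 + logn p n`!.
Proof. by rewrite factS lognM // fact_gt0. Qed.

Lemma leq_logn_fact_add p a b : logn p a`! + logn p b`! <= logn p (a + b)`!.
Proof.
rewrite -lognM ?fact_gt0 //; apply: dvdn_leq_log; first exact: fact_gt0.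
by rewrite -(bin_fact (leq_addl a b)) addnK mulnC dvdn_mull.
Qed.

Lemma logn2_expM e m : 0 < m -> logn 2 (2 ^ e * m) = e + logn 2 m.
Proof. by move=> m_gt0; rewrite lognM ?expn_gt0 // pfactorK. Qed.

Lemma logn2_odd x : odd x -> logn 2 x = 0.
Proof. by move=> ox; rewrite logn_coprime // coprime2n ox. Qed.

Lemma logn2_fact_doubleS a : logn 2 a.*2.+1`! = logn 2 a.*2`!.
Proof. by rewrite logn_factS logn2_odd //= odd_double. Qed.

Lemma logn2_fact_double a : logn 2 a.*2`! = a + logn 2 a`!.
Proof.
elim: a => [//|a IH].
rewrite doubleS logn_factS logn2_fact_doubleS IH -doubleS -mul2n lognM //.
by rewrite (pfactorK 1) // logn_factS; lia.
Qed.

Lemma logn2_fact_half d : logn 2 d`! = d./2 + logn 2 d./2`!.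
Proof.
rewrite -{1}(odd_double_half d).
by case: (odd d); rewrite ?logn2_fact_doubleS logn2_fact_double.
Qed.

Lemma logn2_fact_lt x : 0 < x -> logn 2 x`! < x.
Proof.
elim/ltn_ind: x => x IH x_gt0; rewrite logn2_fact_half.
have := odd_double_half x; rewrite -addnn.
have [->|h_gt0] := posnP x./2; first by rewrite logn1; lia.
by have := IH _ _ h_gt0; lia.
Qed.

Section NoCarry.
Context {p s u : nat} (p_pr : prime p) (dvd_u : p ^ s %| u).

Lemma logn_addn_small z : 0 < z < p ^ s -> logn p (u + z) = logn p z.
Proof.
case/andP=> z_gt0 z_lt.
have uz_gt0 : 0 < u + z by rewrite addn_gt0 z_gt0 orbT.
have same_dvd k : k <= s -> (k <= logn p (u + z)) = (k <= logn p z).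
  move=> le_ks; rewrite -!pfactor_dvdn //.
  by rewrite (dvdn_addr _ (dvdn_trans (dvdn_exp2l p le_ks) dvd_u)).
have lt_log_s : logn p z < s.
  rewrite -(ltn_exp2l _ _ (prime_gt1 p_pr)).
  exact: leq_ltn_trans (dvdn_leq z_gt0 (pfactor_dvdnn p z)) z_lt.
have := same_dvd _ (ltnW lt_log_s); have := same_dvd _ lt_log_s.
rewrite leqnn ltnn; lia.
Qed.

Lemma logn_fact_addn_small b : b < p ^ s -> logn p (u + b)`! = logn p u`! + logn p b`!.
Proof.
elim: b => [|b IH] lt_b; first by rewrite addn0 logn1 addn0.
rewrite addnS !logn_factS IH ?(ltnW lt_b) // -addnS logn_addn_small //; lia.
Qed.

Lemma prime_ndvd_bin_addn_small b : b < p ^ s -> ~~ (p %| 'C(u + b, u)).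
Proof.
move=> lt_b; have := bin_fact (leq_addr b u); rewrite addKn.
move/(congr1 (logn p)); rewrite !lognM ?muln_gt0 ?fact_gt0 ?bin_gt0 ?leq_addr //.
rewrite logn_fact_addn_small // -[X in _ = X]add0n => /addIn log0.
by rewrite -[p]expn1 pfactor_dvdn ?bin_gt0 ?leq_addr // log0.
Qed.

End NoCarry.

(** * Stirling numbers of the second kind *)

Fixpoint stirling2 (l i : nat) : nat :=
  match l, i with
  | 0, 0 => 1
  | 0, _.+1 | _.+1, 0 => 0
  | l'.+1, i'.+1 => i'.+1 * stirling2 l' i'.+1 + stirling2 l' i'
  end.

Lemma stirling2SS l i :
  stirling2 l.+1 i.+1 = i.+1 * stirling2 l i.+1 + stirling2 l i.
Proof. by []. Qed.

Lemma stirling2_small l i : l < i -> stirling2 l i = 0.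
Proof. by elim: l i => [|l IH] [|i] //= lt_li; rewrite !IH ?muln0 // ltnW. Qed.

Lemma stirling2nn l : stirling2 l l = 1.
Proof. by elim: l => [//|l IH] /=; rewrite IH stirling2_small ?muln0. Qed.

Lemma stirling2S1 l : stirling2 l.+1 1 = 1.
Proof. by elim: l => [//|l IH]; rewrite /= in IH *; rewrite IH. Qed.

Lemma mul_ffact j i : j * j ^_ i = j ^_ i.+1 + i * j ^_ i.
Proof.
have [le_ij|lt_ji] := leqP i j.
  by rewrite ffactnSr [_ * (j - i)]mulnC -mulnDl subnK.
by rewrite ffact_small // ffact_small ?muln0 // ltnW.
Qed.

Lemma expn_stirling2 j l : j ^ l = \sum_(i < l.+1) stirling2 l i * j ^_ i.
Proof.
elim: l => [|l IH]; first by rewrite big_ord_recl big_ord0.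
rewrite expnS IH big_distrr /=.
under eq_bigr do rewrite mulnCA mul_ffact mulnDr mulnCA mulnA.
rewrite big_split /= [RHS]big_ord_recl /= mul0n add0n.
under [in RHS]eq_bigr do rewrite /bump /= add1n mulnDl.
rewrite big_split /= addnC; congr (_ + _).
rewrite big_ord_recl /= mul0n add0n big_ord_recr /= stirling2_small // muln0 addn0.
by apply: eq_bigr => i _; rewrite /bump /= add1n.
Qed.

Lemma odd_stirling2_diag m u : 0 < m ->
  odd (stirling2 (m + u) m) = odd 'C(u + (m.-1)./2, u).
Proof.
elim: m u => [//|[|m] IH] u _; first by rewrite add1n stirling2S1 addn0 binn.
elim: u => [|u IHu]; first by rewrite addn0 stirling2nn bin0.
rewrite addnS stirling2SS oddD oddM IHu (addSnnS m.+1 u) (IH u.+1) //.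
rewrite /= uphalf_half negbK.
by case: (odd m); rewrite /= ?add0n // !add1n !addnS !addSn [in RHS]binS oddD addbC.
Qed.

Lemma odd_stirling2 {m l : nat} : 0 < m -> m <= l -> 2 ^ trunc_log 2 m %| l - m ->
  odd (stirling2 l m).
Proof.
move=> m_gt0 le_ml dvd_lm; rewrite -(subnKC le_ml) odd_stirling2_diag //.
have lt_half : (m.-1)./2 < 2 ^ trunc_log 2 m.
  by have := trunc_log_ltn m (isT : 1 < 2); rewrite expnS; lia.
have := prime_ndvd_bin_addn_small (isT : prime 2) dvd_lm _ lt_half.
by rewrite dvdn2 negbK.
Qed.

(** * Even parts of binomial expansions *)

Lemma ffactS n m : n.+1 ^_ m = n ^_ m + m * n ^_ m.-1.
Proof. by case: m => [|m] //; rewrite ffactSS mulSn mul_ffact /=; lia. Qed.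

Lemma sum_binS (f : nat -> nat) i :
  \sum_(k < i.+2) 'C(i.+1, k) * f k = \sum_(k < i.+1) 'C(i, k) * (f k + f k.+1).
Proof.
rewrite big_ord_recl; under eq_bigr do rewrite binS mulnDl.
rewrite big_split /= addnA; under [RHS]eq_bigr do rewrite mulnDr.
rewrite big_split /=; congr (_ + _).
by rewrite big_ord_recr [RHS]big_ord_recl /= (bin_small (ltnSn i)) mul0n addn0 !bin0.
Qed.

Definition even_ffact t k := if odd k then 0 else k./2 ^_ t.
Definition odd_ffact t k := if odd k then k./2 ^_ t else 0.

Lemma odd_ffactS t k : odd_ffact t k.+1 = even_ffact t k.
Proof. by rewrite /odd_ffact /even_ffact /= uphalf_half; case: odd. Qed.

Lemma even_ffactS t k : even_ffact t k.+1 = odd_ffact t k + t * odd_ffact t.-1 k.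
Proof.
by rewrite /odd_ffact /even_ffact /= uphalf_half; case: odd; rewrite ?muln0 // ffactS.
Qed.

Lemma even_ffactSS t k : 2 * even_ffact t.+1 k.+1 = k.+1 * odd_ffact t k.
Proof.
rewrite /odd_ffact /even_ffact /= uphalf_half.
case: (boolP (odd k)) => [odd_k|]; rewrite ?muln0 //= ffactSS mulnA.
by congr (_ * _); have := odd_double_half k; rewrite odd_k -addnn; lia.
Qed.

(* [bin_even_ffact i t] is the [t]-th derivative at [1] of the even part
   [\sum_s 'C(i, 2 s) z ^ s] of [(1 + x) ^ i] in [z = x ^ 2]. *)
Definition bin_even_ffact i t := \sum_(k < i.+1) 'C(i, k) * even_ffact t k.
Definition bin_odd_ffact i t := \sum_(k < i.+1) 'C(i, k) * odd_ffact t k.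

Lemma bin_odd_ffactS i t :
  bin_odd_ffact i.+1 t = bin_even_ffact i t + bin_odd_ffact i t.
Proof.
rewrite /bin_odd_ffact sum_binS addnC -big_split /=.
by apply: eq_bigr => k _; rewrite odd_ffactS mulnDr.
Qed.

Lemma bin_even_ffactS i t : bin_even_ffact i.+1 t =
  bin_even_ffact i t + bin_odd_ffact i t + t * bin_odd_ffact i t.-1.
Proof.
rewrite /bin_even_ffact /bin_odd_ffact sum_binS big_distrr -!big_split /=.
by apply: eq_bigr => k _; rewrite even_ffactS; ring.
Qed.

Lemma bin_even_ffactSS i t : 2 * bin_even_ffact i.+1 t.+1 = i.+1 * bin_odd_ffact i t.
Proof.
rewrite /bin_even_ffact /bin_odd_ffact big_ord_recl /even_ffact /= ffact0n muln0 add0n.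
rewrite -/even_ffact !big_distrr /=; apply: eq_bigr => k _.
rewrite mulnCA even_ffactSS /bump /= !add0n add1n.
by rewrite mulnA [_ * k.+1]mulnC -mul_bin_diag mulnA.
Qed.

Lemma bin_odd_ffact_closed i t :
  2 ^ t.*2.+1 * bin_odd_ffact i.+1 t = 2 ^ i.+1 * (i - t) ^_ t.
Proof.
have rec j u :
    bin_odd_ffact j.+2 u = 2 * bin_odd_ffact j.+1 u + u * bin_odd_ffact j u.-1.
  by rewrite !bin_odd_ffactS bin_even_ffactS; lia.
elim/ltn_ind: i t => -[|[|i]] IH t.
- rewrite /bin_odd_ffact !big_ord_recr big_ord0 /= /odd_ffact /= ffact0n.
  by case: t => [|t] //; rewrite !muln0.
- rewrite /bin_odd_ffact !big_ord_recr big_ord0 /= /odd_ffact /= !ffact0n.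
  by case: t => [|[|t]]; rewrite ?muln0.
rewrite rec; case: t => [|t].
  by rewrite mul0n addn0 mulnCA (IH i.+1) // !ffactn0 !expnS; ring.
have pascal : (i.+1 - t) ^_ t.+1 = (i - t) ^_ t.+1 + t.+1 * (i - t) ^_ t.
  have [le_ti|lt_it] := leqP t i; first by rewrite subSn // ffactS.
  by rewrite !ffact_small ?muln0 //; lia.
rewrite mulnDr mulnCA (IH i.+1) // subSS pascal /=.
have -> : 2 ^ t.+1.*2.+1 * (t.+1 * bin_odd_ffact i.+1 t) =
          4 * t.+1 * (2 ^ t.*2.+1 * bin_odd_ffact i.+1 t).
  by rewrite doubleS !expnS; ring.
by rewrite (IH i) // !expnS; ring.
Qed.

Lemma bin_even_ffact0 i : bin_even_ffact i.+1 0 = 2 ^ i.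
Proof.
have := bin_odd_ffactS i.+1 0; have := bin_odd_ffact_closed i.+1 0.
have := bin_odd_ffact_closed i 0; rewrite !ffactn0 !expnS; lia.
Qed.

Lemma bin_even_ffact_closed i t :
  2 ^ t.*2.+2 * bin_even_ffact i.+2 t.+1 = i.+2 * 2 ^ i.+1 * (i - t) ^_ t.
Proof.
rewrite expnS -mulnA mulnCA bin_even_ffactSS mulnCA bin_odd_ffact_closed.
by rewrite mulnA.
Qed.

Lemma logn2_fact_le_bin_even_ffact i t :
  0 < bin_even_ffact i t -> logn 2 i`! <= logn 2 (bin_even_ffact i t) + t.
Proof.
case: t => [|t] W_gt0.
  case: i W_gt0 => [|i] _; first by rewrite logn1.
  by rewrite bin_even_ffact0 pfactorK // addn0 -ltnS logn2_fact_lt.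
case: i W_gt0 => [|[|i]] W_gt0.
- by move: W_gt0; rewrite /bin_even_ffact big_ord_recl big_ord0 /even_ffact /= ffact0n.
- by move: W_gt0; rewrite /bin_even_ffact !big_ord_recr big_ord0 /even_ffact /= ffact0n.
have closed := bin_even_ffact_closed i t.
set W := bin_even_ffact i.+2 t.+1 in W_gt0 closed *.
have : 0 < 2 ^ t.*2.+2 * W by rewrite muln_gt0 expn_gt0.
rewrite closed !muln_gt0 ffact_gt0 => /andP[_ le_t].
have E : 2 ^ t.*2.+2 * (W * (i - t - t)`!) = 2 ^ i.+1 * (i.+2 * (i - t)`!).
  by rewrite -(ffact_fact le_t) [LHS]mulnA closed; ring.
move/(congr1 (logn 2)): E => E.
rewrite !logn2_expM ?muln_gt0 ?fact_gt0 ?W_gt0 // !lognM ?fact_gt0 // in E.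
rewrite logn_factS; have := leq_logn_fact_add 2 i.+1 (i - t - t).
have -> : i.+1 + (i - t - t) = (i - t).*2.+1 by rewrite -addnn; lia.
rewrite logn2_fact_doubleS logn2_fact_double; lia.
Qed.

Lemma dvdn_fact_bin_even_ffact i t : 2 ^ logn 2 i`! %| 2 ^ t * bin_even_ffact i t.
Proof.
have [->|W_gt0] := posnP (bin_even_ffact i t); first by rewrite muln0 dvdn0.
rewrite pfactor_dvdn ?muln_gt0 ?expn_gt0 // logn2_expM //.
by rewrite addnC logn2_fact_le_bin_even_ffact.
Qed.

Local Open Scope ring_scope.

Lemma Posz_sum I (r : seq I) (P : pred I) (F : I -> nat) :
  (\sum_(i <- r | P i) F i)%N%:Z = \sum_(i <- r | P i) (F i)%:Z.
Proof. exact: (big_morph Posz PoszD). Qed.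

Lemma sum_ord_widen {R : nmodType} (F : nat -> R) {m n : nat} : (m <= n)%N ->
  (forall k, (m <= k)%N -> F k = 0) -> \sum_(k < n) F k = \sum_(k < m) F k.
Proof.
move=> le_mn F0; rewrite (big_ord_widen _ F le_mn) [RHS]big_mkcond /=.
by apply: eq_bigr => k _; case: ltnP => // /F0.
Qed.

Lemma sum_ord_double {R : nmodType} (F : nat -> R) n :
  \sum_(k < n.*2) F k = \sum_(j < n) (F j.*2 + F j.*2.+1).
Proof.
elim: n => [|n IH]; first by rewrite !big_ord0.
by rewrite doubleS !big_ord_recr /= IH addrA.
Qed.

Lemma sum_nat_dvdn {R : nmodType} (F : nat -> R) q n : (0 < q)%N ->
  (forall k, (n < k)%N -> F k = 0) ->
  \sum_(0 <= k < n.+1 | (q %| k)%N) F k = \sum_(j < (n %/ q).+1) F (q * j)%N.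
Proof.
move=> q_gt0 F0.
have mult M :
    \sum_(k < q * M) (if (q %| k)%N then F k else 0) = \sum_(j < M) F (q * j)%N.
  elim: M => [|M IH]; first by rewrite muln0 !big_ord0.
  rewrite mulnS addnC big_split_ord /= IH big_ord_recr /=; congr (_ + _).
  rewrite -[q]prednK // big_ord_recl /= addn0 dvdn_mulr // big1 ?addr0 // => k _.
  rewrite /bump /= add1n dvdn_addr ?dvdn_mulr //.
  by case: ifP => // /dvdn_leq; have := ltn_ord k; lia.
have le_n : (n.+1 <= q * (n %/ q).+1)%N by rewrite mulnC ltn_ceil.
rewrite big_mkord big_mkcond /= -mult; symmetry.
apply: (sum_ord_widen (fun k => if (q %| k)%N then F k else 0) le_n) => k lt_nk.
by rewrite F0 ?if_same.
Qed.

(** * Binomial inversion *)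

Lemma alt_sum_bin_bin n u :
  \sum_(k < n.+1) (-1) ^+ k * ('C(n, k))%:Z * ('C(k, u))%:Z =
  if n == u then (-1) ^+ u else 0.
Proof.
elim: n u => [|n IH] u.
  by rewrite big_ord_recl big_ord0 addr0 /= bin0n; case: u.
have pascal k : (-1) ^+ k.+1 * ('C(n.+1, k.+1))%:Z * ('C(k.+1, u))%:Z =
    (-1) ^+ k.+1 * ('C(n, k.+1))%:Z * ('C(k.+1, u))%:Z
    - (-1) ^+ k * ('C(n, k))%:Z * ('C(k.+1, u))%:Z.
  by rewrite binS PoszD exprS; ring.
rewrite big_ord_recl; under eq_bigr do rewrite /bump /= ?add1n pascal.
rewrite sumrB addrA.
have -> : (-1) ^+ 0 * ('C(n.+1, 0))%:Z * ('C(0, u))%:Z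
    + \sum_(k < n.+1) (-1) ^+ k.+1 * ('C(n, k.+1))%:Z * ('C(k.+1, u))%:Z
    = \sum_(k < n.+1) (-1) ^+ k * ('C(n, k))%:Z * ('C(k, u))%:Z.
  rewrite [RHS]big_ord_recl big_ord_recr /= (bin_small (ltnSn n)) mulr0 mul0r.
  rewrite addr0 !bin0.
  by congr (_ + _); apply: eq_bigr => k _; rewrite /bump /= ?add1n.
case: u {pascal} => [|u].
  by under [X in _ - X]eq_bigr => k _ do rewrite bin0 -(bin0 k); rewrite subrr.
under [X in _ - X]eq_bigr do rewrite binS PoszD mulrDr.
by rewrite big_split /= !IH eqSS exprS; case: (n == u); ring.
Qed.

Lemma bin_inversion (f : nat -> int) n :
  \sum_(i < n.+1) (-1) ^+ i * ('C(n, i))%:Z * \sum_(k < i.+1) ('C(i, k))%:Z * f k =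
  (-1) ^+ n * f n.
Proof.
have widen (i : 'I_n.+1) :
    \sum_(k < i.+1) ('C(i, k))%:Z * f k = \sum_(k < n.+1) ('C(i, k))%:Z * f k.
  rewrite [RHS](sum_ord_widen (fun k => ('C(i, k))%:Z * f k) (ltn_ord i)) // => k.
  by move=> lt_ik; rewrite bin_small ?mul0r.
under eq_bigr => i _ do rewrite widen big_distrr /=.
rewrite exchange_big /=.
under eq_bigr => k _ do
  (under eq_bigr => i _ do rewrite mulrA; rewrite -big_distrl /= alt_sum_bin_bin).
by rewrite big_ord_recr /= eqxx big1 ?add0r // => k _; rewrite gtn_eqF ?mul0r.
Qed.

Lemma alt_sum_bin_even_ffact k t :
  \sum_(i < k.+1) (-1) ^+ i * ('C(k, i))%:Z * (bin_even_ffact i t)%:Z =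
  (even_ffact t k)%:Z.
Proof.
have castE i : (bin_even_ffact i t)%:Z =
    \sum_(j < i.+1) ('C(i, j))%:Z * (even_ffact t j)%:Z by rewrite Posz_sum.
under eq_bigr do rewrite castE.
rewrite (bin_inversion (fun j => (even_ffact t j)%:Z)) -signr_odd /even_ffact.
by case: odd; rewrite ?mulr0 ?mul1r.
Qed.

(** * Flatness at 1 and the even part *)

Lemma dvdz2_of_logn {x : nat} {c : int} : (0 < x)%N ->
  (2%:Z ^+ (logn 2 x).+1 %| x%:Z * c)%Z -> (2%:Z %| c)%Z.
Proof.
move=> x_gt0; rewrite !dvdzE abszM abszX /=.
have [->|c_gt0] := posnP `|c|; first by rewrite dvdn0.
rewrite -[X in (X %| `|c|)%N]expn1 !pfactor_dvdn ?muln_gt0 ?x_gt0 // lognM //; lia.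
Qed.

Lemma dvdz_fact_transfer x a b w (c : int) :
  (2%:Z ^+ (a + b) %| (x`!)%:Z * c)%Z -> (2 ^ logn 2 x`! %| 2 ^ a * w)%N ->
  (2%:Z ^+ b %| w%:Z * c)%Z.
Proof.
rewrite !dvdzE !abszM !abszX /=.
have [->|c_gt0] := posnP `|c|; first by rewrite !muln0 !dvdn0.
have [->|w_gt0] := posnP w; first by rewrite mul0n dvdn0.
rewrite !pfactor_dvdn ?muln_gt0 ?expn_gt0 ?c_gt0 ?w_gt0 ?fact_gt0 //.
by rewrite logn2_expM // !lognM ?fact_gt0 //; lia.
Qed.

(* With [f = \sum_k r k X ^ k] of degree [d], [i`! * taylor1 r d i] is the
   derivative [f^(i)(1)]. *)
Definition taylor1 (r : nat -> int) d i := \sum_(k < d.+1) r k * ('C(k, i))%:Z.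

Definition flat_at_one (r : nat -> int) d :=
  [/\ forall k, (d < k)%N -> r k = 0, ~~ (2%:Z %| r d)%Z &
      forall i, (i < d)%N -> (2%:Z ^+ (logn 2 d`!).+1 %| (i`!)%:Z * taylor1 r d i)%Z].

Lemma taylor1nn r d : taylor1 r d d = r d.
Proof.
rewrite /taylor1 big_ord_recr /= binn mulr1 big1 ?add0r // => k _.
by rewrite bin_small ?mulr0.
Qed.

Lemma flat_at_one_sign_bin n : flat_at_one (fun k => (-1) ^+ k * ('C(n, k))%:Z) n.
Proof.
split=> [k lt_nk||i lt_in]; first by rewrite bin_small // mulr0.
  by rewrite binn mulr1 dvdzE absz_sign.
by rewrite /taylor1 alt_sum_bin_bin gtn_eqF // mulr0 dvdz0.
Qed.

Lemma taylor1_even_part (r : nat -> int) d t : (forall k, (d < k)%N -> r k = 0) ->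
  (t`!)%:Z * taylor1 (fun j => r j.*2) d./2 t =
  \sum_(i < d.+1) (-1) ^+ i * (bin_even_ffact i t)%:Z * taylor1 r d i.
Proof.
move=> r_supp.
have -> : (t`!)%:Z * taylor1 (fun j => r j.*2) d./2 t =
    \sum_(k < d.+1) r k * (even_ffact t k)%:Z.
  have le_d : (d.+1 <= d./2.+1.*2)%N by rewrite doubleS -addnn; lia.
  rewrite -(sum_ord_widen (fun k => r k * (even_ffact t k)%:Z) le_d); last first.
    by move=> k lt_dk; rewrite r_supp ?mul0r.
  rewrite (sum_ord_double (fun k => r k * (even_ffact t k)%:Z)) /taylor1 big_distrr.
  apply: eq_bigr => j _ /=.
  rewrite /even_ffact odd_double /= odd_double doubleK mulr0 addr0.
  by rewrite mulrCA -PoszM mulnC bin_ffact.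
have inv (k : 'I_d.+1) : (even_ffact t k)%:Z =
    \sum_(i < d.+1) (-1) ^+ i * ('C(k, i))%:Z * (bin_even_ffact i t)%:Z.
  rewrite -alt_sum_bin_even_ffact.
  rewrite (sum_ord_widen (fun i => (-1) ^+ i * ('C(k, i))%:Z * (bin_even_ffact i t)%:Z)
    (ltn_ord k)) // => i lt_ki.
  by rewrite bin_small // mulr0 mul0r.
under eq_bigr do rewrite inv big_distrr /=.
rewrite exchange_big /=; apply: eq_bigr => i _.
by rewrite /taylor1 big_distrr /=; apply: eq_bigr => k _; ring.
Qed.

Lemma flat_at_one_even_top {r : nat -> int} {d : nat} :
  flat_at_one r d -> ~~ (2%:Z %| r (d./2).*2)%Z.
Proof.
case=> _ r_top r_flat; have [odd_d|even_d] := boolP (odd d); last by rewrite even_halfK.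
have de : d = (d./2.*2).+1 by rewrite halfK odd_d subn1 prednK ?odd_gt0.
move: (d./2.*2) (odd_double d./2) de r_top r_flat => e even_e -> r_top r_flat.
have := r_flat e (ltnSn e).
have -> : taylor1 r e.+1 e = r e + r e.+1 * (e.+1)%:Z.
  rewrite /taylor1 !big_ord_recr /= big1 ?add0r ?binn ?binSn ?mulr1 // => k _.
  by rewrite bin_small ?mulr0.
rewrite logn_factS logn2_odd /= ?even_e // add0n => /(dvdz2_of_logn (fact_gt0 e)).
move=> two_sum; apply: (contraNN _ r_top) => two_re.
have : (2%:Z %| r e.+1 * (e.+1)%:Z)%Z by rewrite -(rpredDl _ two_re).
by rewrite !dvdzE abszM Euclid_dvdM //= !dvdn2 /= negbK even_e orbF.
Qed.

Lemma flat_at_one_even_part {r : nat -> int} {d : nat} :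
  flat_at_one r d -> flat_at_one (fun j => r j.*2) d./2.
Proof.
move=> flat_rd; have [r_supp _ r_flat] := flat_rd; split.
- by move=> k lt_k; apply: r_supp; have := odd_double_half d; lia.
- exact: flat_at_one_even_top flat_rd.
move=> t lt_t; rewrite taylor1_even_part //; apply: rpred_sum => i _.
rewrite -mulrA; apply: dvdz_mull; have [lt_id|le_di] := ltnP i d.
  have flat_i := r_flat i lt_id; rewrite logn2_fact_half -addnS in flat_i.
  apply: dvdz_fact_transfer flat_i _.
  apply: dvdn_trans (dvdn_fact_bin_even_ffact i t) _.
  by rewrite dvdn_mul // dvdn_exp2l // ltnW.
have -> : nat_of_ord i = d by have := ltn_ord i; lia.
rewrite taylor1nn; apply: dvdz_mulr; rewrite dvdzE abszX /=.
rewrite -(dvdn_pmul2l (expn_gt0 2 t)) -expnD.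
apply: dvdn_trans (dvdn_fact_bin_even_ffact d t).
by rewrite dvdn_exp2l // [X in (_ <= X)%N]logn2_fact_half; lia.
Qed.

Lemma eq_flat_at_one {r1 r2 : nat -> int} {d : nat} :
  flat_at_one r1 d -> r1 =1 r2 -> flat_at_one r2 d.
Proof.
move=> [r_supp r_top r_flat] eq_r; split=> [k lt_dk||i lt_id]; rewrite -?eq_r //.
  exact: r_supp.
have -> : taylor1 r2 d i = taylor1 r1 d i by apply: eq_bigr => k _; rewrite eq_r.
exact: r_flat.
Qed.

Definition sign_bin_section n q j : int := (-1) ^+ (q * j) * ('C(n, q * j))%:Z.

Lemma flat_at_one_section n a : flat_at_one (sign_bin_section n (2 ^ a)) (n %/ 2 ^ a).
Proof.
elim: a => [|a IH].
  rewrite divn1; apply: (eq_flat_at_one (flat_at_one_sign_bin n)) => j.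
  by rewrite /sign_bin_section mul1n.
rewrite expnSr divnMA divn2; apply: (eq_flat_at_one (flat_at_one_even_part IH)) => j.
by rewrite /sign_bin_section -mul2n mulnA.
Qed.

(** * Power moments *)

Definition moment (r : nat -> int) d l := \sum_(j < d.+1) r j * (j%:Z) ^+ l.

Lemma moment_taylor1 r d l : (d <= l)%N ->
  moment r d l = \sum_(i < d) (stirling2 l i)%:Z * ((i`!)%:Z * taylor1 r d i)
                 + (stirling2 l d)%:Z * ((d`!)%:Z * r d).
Proof.
move=> le_dl.
have castX j : (j%:Z) ^+ l = \sum_(i < l.+1) (stirling2 l i)%:Z * (j ^_ i)%:Z.
  by rewrite -natz -natrX natz expn_stirling2 Posz_sum.
have -> : moment r d l =
    \sum_(i < l.+1) (stirling2 l i)%:Z * ((i`!)%:Z * taylor1 r d i).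
  rewrite /moment; under eq_bigr do rewrite castX big_distrr /=.
  rewrite exchange_big /=; apply: eq_bigr => i _.
  rewrite /taylor1 !big_distrr /=; apply: eq_bigr => j _.
  by rewrite -bin_ffact PoszM; ring.
rewrite (sum_ord_widen (fun i => (stirling2 l i)%:Z * ((i`!)%:Z * taylor1 r d i))
  (le_dl : (d.+1 <= l.+1)%N)) => [|i lt_di]; first by rewrite big_ord_recr /= taylor1nn.
rewrite /taylor1 big1 ?mulr0 // => j _.
by rewrite bin_small ?mulr0 // (leq_trans _ lt_di).
Qed.

Lemma ord2_add_pow2M (a o : int) e : (2%:Z ^+ e.+1 %| a)%Z -> ~~ (2%:Z %| o)%Z ->
  a + 2%:Z ^+ e * o != 0 /\ ord2 (a + 2%:Z ^+ e * o) = e.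
Proof.
case/dvdzP=> b -> odd_o.
have -> : b * 2%:Z ^+ e.+1 + 2%:Z ^+ e * o = 2%:Z ^+ e * (b * 2%:Z + o).
  by rewrite exprS; ring.
have odd_c : ~~ (2%:Z %| b * 2%:Z + o)%Z by rewrite rpredDl // dvdz_mull.
have c_neq0 : b * 2%:Z + o != 0 by apply: contraNneq odd_c => ->; rewrite dvdz0.
split; first by rewrite mulf_neq0 // expf_neq0.
rewrite /ord2 abszM abszX logn2_expM ?absz_gt0 // logn2_odd ?addn0 //.
by move: odd_c; rewrite dvdzE dvdn2 negbK.
Qed.

Lemma ord2_moment {r : nat -> int} {d l : nat} :
  flat_at_one r d -> (d <= l)%N -> odd (stirling2 l d) ->
  moment r d l != 0 /\ ord2 (moment r d l) = logn 2 d`!.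
Proof.
case=> _ r_top r_flat le_dl odd_S.
have [o odd_o fact_d] := pfactor_coprime (isT : prime 2) (fact_gt0 d).
have -> : moment r d l = \sum_(i < d) (stirling2 l i)%:Z * ((i`!)%:Z * taylor1 r d i)
    + 2%:Z ^+ logn 2 d`! * ((stirling2 l d * o)%:Z * r d).
  have pow2Z k : ((2 ^ k)%N)%:Z = 2%:Z ^+ k by rewrite -natz natrX.
  by rewrite moment_taylor1 // [in (d`!)%:Z]fact_d !PoszM pow2Z; ring.
apply: ord2_add_pow2M.
  by apply: rpred_sum => i _; apply: dvdz_mull; exact: r_flat.
move: r_top odd_o; rewrite !dvdzE abszM /= !Euclid_dvdM // !dvdn2 odd_S coprime2n.
by rewrite negbK => -> ->.
Qed.

Theorem theorem1p8 (alpha n l : nat) :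
  (1 <= n %/ 2 ^ alpha)%N ->
  (n %/ 2 ^ alpha <= l)%N ->
  l = n %/ 2 ^ alpha %[mod 2 ^ trunc_log 2 (n %/ 2 ^ alpha)] ->
  let S : int := \sum_(0 <= k < n.+1 | (2 ^ alpha %| k)%N)
        ('C(n, k))%:Z * (-1) ^+ k * ((k %/ 2 ^ alpha)%N%:Z) ^+ l in
  S != 0 /\ ord2 S = logn 2 (n %/ 2 ^ alpha)`!.
Proof.
move=> m_gt0 le_ml cong_lm S.
have -> : S = moment (sign_bin_section n (2 ^ alpha)) (n %/ 2 ^ alpha) l.
  rewrite /S sum_nat_dvdn ?expn_gt0 // => [|k lt_nk]; last by rewrite bin_small ?mul0r.
  by apply: eq_bigr => j _; rewrite mulKn ?expn_gt0 // [_ * (-1) ^+ _]mulrC.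
have dvd_lm : (2 ^ trunc_log 2 (n %/ 2 ^ alpha) %| l - n %/ 2 ^ alpha)%N.
  by rewrite -eqn_mod_dvd // cong_lm.
have odd_S := odd_stirling2 m_gt0 le_ml dvd_lm.
exact: ord2_moment (flat_at_one_section n alpha) le_ml odd_S.
Qed.
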